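(* Let $r\ge2$ be an integer, let $f\in C_p(\mathbb{R})$, let $n\in\mathbb{N}_0$, $k\in\{0,1,\dots,r^n-1\}$, $y\in(0,1)$ and $t\in(0,\infty)$. Then $$q_f\Big(t,x;\tfrac{k+y}{r^n}\Big)\ge \min\Big\{q_f\Big(t,x;\tfrac{k}{r^n}\Big),\,q_f\Big(t,x;\tfrac{k+1}{r^n}\Big)\Big\}\quad\text{for all }x\in\mathbb{R}$$ holds if and only if $\Delta_{n,k}(y;f)\le -\frac1t$.
   Context: $C_p(\mathbb{R})$ denotes the set of all continuous functions $f:\mathbb{R}\to\mathbb{R}$ periodic with period $1$ with $f(0)=0$; $\mathbb{N}_0=\mathbb{N}\cup\{0\}$. For $f\in C_p(\mathbb{R})$, $q_f(t,x;z)=f(z)+\frac{1}{2t}(x-z)^2$ for $(t,x,z)\in(0,\infty)\times\mathbb{R}\times\mathbb{R}$. For $(n,k,y)\in\mathbb{N}_0\times\mathbb{Z}\times(0,1)$, $\delta^+_{n,k}(y;f)=\dfrac{f(\frac{k+1}{r^n})-f(\frac{k+y}{r^n})}{\frac{1-y}{r^n}}$, $\delta^-_{n,k}(y;f)=\dfrac{f(\frac{k+y}{r^n})-f(\frac{k}{r^n})}{\frac{y}{r^n}}$, and $\Delta_{n,k}(y;f)=2r^n\big(\delta^+_{n,k}(y;f)-\delta^-_{n,k}(y;f)\big)$. *)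

From Stdlib Require Import Reals Lra ZArith.
Open Scope R_scope.

Definition Cp (f : R -> R) : Prop :=
  continuity f /\ (forall x, f (x + 1) = f x) /\ f 0 = 0.

Definition q (f : R -> R) (t x z : R) : R := f z + (x - z) ^ 2 / (2 * t).

Definition pt (r : nat) (n : nat) (k : Z) (y : R) : R := (IZR k + y) / (INR r ^ n).

Definition delta_plus (r n : nat) (k : Z) (y : R) (f : R -> R) : R :=
  (f (pt r n k 1) - f (pt r n k y)) / ((1 - y) / (INR r ^ n)).

Definition delta_minus (r n : nat) (k : Z) (y : R) (f : R -> R) : R :=
  (f (pt r n k y) - f (pt r n k 0)) / (y / (INR r ^ n)).

Definition Delta_nk (r n : nat) (k : Z) (y : R) (f : R -> R) : R :=
  2 * INR r ^ n * (delta_plus r n k y f - delta_minus r n k y f).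

From Stdlib Require Import Reals Lra Lia.
Open Scope R_scope.

(* For fixed nodes the difference of two parabolas q f t x w - q f t x z is
   affine in x, vanishing at the midpoint of z and w shifted by t times the
   secant slope of f.  Hence q at the middle node z lies above q at z0 for x
   left of one such threshold and above q at z1 for x right of another; the
   two half-lines cover R exactly when the thresholds are in order, which is
   the stated bound on the difference of the secant slopes. *)

Definition secant (f : R -> R) (z w : R) : R := (f w - f z) / (w - z).

Lemma Rmin_le_iff (a b c : R) : Rmin a b <= c <-> a <= c \/ b <= c.
Proof. unfold Rmin; destruct (Rle_dec a b); split; intros; lra. Qed.

Lemma halflines_cover_iff (a b : R) : (forall x, x <= a \/ b <= x) <-> b <= a.
Proof.
  split.
  - intros cover; destruct (cover ((a + b) / 2)); lra.
  - intros ba x; destruct (Rle_or_lt x a); lra.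
Qed.

Lemma q_sub_q (f : R -> R) (t x z w : R) : t <> 0 -> z <> w ->
  q f t x w - q f t x z = (w - z) / t * ((z + w) / 2 + t * secant f z w - x).
Proof. intros t0 zw; unfold q, secant; field; lra. Qed.

Lemma q_le_q_right_iff (f : R -> R) (t x z w : R) : 0 < t -> z < w ->
  q f t x z <= q f t x w <-> x <= (z + w) / 2 + t * secant f z w.
Proof.
  intros t0 zw.
  assert (pos : 0 < (w - z) / t) by (apply Rdiv_lt_0_compat; lra).
  pose proof (q_sub_q f t x z w ltac:(lra) ltac:(lra)).
  split; intros; nra.
Qed.

Lemma q_le_q_left_iff (f : R -> R) (t x z w : R) : 0 < t -> z < w ->
  q f t x w <= q f t x z <-> (z + w) / 2 + t * secant f z w <= x.
Proof.
  intros t0 zw.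
  assert (pos : 0 < (w - z) / t) by (apply Rdiv_lt_0_compat; lra).
  pose proof (q_sub_q f t x z w ltac:(lra) ltac:(lra)).
  split; intros; nra.
Qed.

Lemma q_above_min_iff (f : R -> R) (t z0 z z1 : R) : 0 < t -> z0 < z < z1 ->
  (forall x, q f t x z >= Rmin (q f t x z0) (q f t x z1)) <->
  2 * (secant f z z1 - secant f z0 z) / (z1 - z0) <= - (1 / t).
Proof.
  intros t0 zs.
  transitivity (forall x, x <= (z0 + z) / 2 + t * secant f z0 z \/
                          (z + z1) / 2 + t * secant f z z1 <= x).
  { split; intros above x; specialize (above x).
    - apply Rge_le, Rmin_le_iff in above.
      rewrite <- q_le_q_right_iff, <- q_le_q_left_iff by lra; exact above.
    - apply Rle_ge, Rmin_le_iff.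
      rewrite q_le_q_right_iff, q_le_q_left_iff by lra; exact above. }
  rewrite halflines_cover_iff.
  transitivity (t * (secant f z z1 - secant f z0 z) <= - (z1 - z0) / 2).
  { split; intros; nra. }
  assert (Linv : (z1 - z0) * / (z1 - z0) = 1) by (field; lra).
  assert (tinv : t * / t = 1) by (field; lra).
  pose proof (Rinv_0_lt_compat (z1 - z0) ltac:(lra)); pose proof (Rinv_0_lt_compat t t0).
  unfold Rdiv; split; intros; nra.
Qed.

Lemma pt_sub (r n : nat) (k : Z) (z w : R) :
  pt r n k w - pt r n k z = (w - z) / INR r ^ n.
Proof. unfold pt, Rdiv; ring. Qed.

Theorem proposition2p2 (r : nat) (f : R -> R) (n : nat) (k : Z) (y t : R) :
  (2 <= r)%nat ->
  Cp f ->
  (0 <= k <= Z.of_nat (Nat.pow r n) - 1)%Z ->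
  0 < y < 1 ->
  0 < t ->
  ((forall x : R,
      q f t x (pt r n k y) >= Rmin (q f t x (pt r n k 0)) (q f t x (pt r n k 1)))
   <-> Delta_nk r n k y f <= - (1 / t)).
Proof.
  (* Only r^n > 0 matters: the criterion holds for every f and every k. *)
  intros r2 _ _ y01 t0.
  assert (H0 : 0 < INR r ^ n) by (apply pow_lt, lt_0_INR; lia).
  assert (nodes : pt r n k 0 < pt r n k y < pt r n k 1).
  { pose proof (pt_sub r n k 0 y); pose proof (pt_sub r n k y 1).
    pose proof (Rdiv_lt_0_compat y _ ltac:(lra) H0).
    pose proof (Rdiv_lt_0_compat (1 - y) _ ltac:(lra) H0).
    lra. }
  rewrite (q_above_min_iff f t _ _ _ t0 nodes).
  replace (Delta_nk r n k y f)
    with (2 * (secant f (pt r n k y) (pt r n k 1) - secant f (pt r n k 0) (pt r n k y))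
          / (pt r n k 1 - pt r n k 0)); [reflexivity|].
  unfold Delta_nk, delta_plus, delta_minus, secant; rewrite !pt_sub, Rminus_0_r.
  field; lra.
Qed.
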